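(* Let $\mathcal{W}$ be a finite set and $(X_t)_{t\ge1}$ a time-homogeneous first-order Markov chain on $\mathcal{W}$ with initial distribution $p_{x_1}$ and transition probabilities $q_x(x_{t+1}\mid x_t)$. For any history-dependent release policy $\boldsymbol q_h\in\mathcal{Q}_H$ there exists a policy $\boldsymbol q_s\in\mathcal{Q}_S$ such that, for every $n\ge1$, $$\sum_{t=1}^n I^{\boldsymbol q_h}(X_t,X_{t-1};Y_t\mid Y^{t-1})=\sum_{t=1}^n I^{\boldsymbol q_s}(X_t,X_{t-1};Y_t\mid Y^{t-1}).$$
   Context: Notation: $X^t=(X_1,\dots,X_t)$, $Y^{t-1}=(Y_1,\dots,Y_{t-1})$, $Y^0$ empty; at $t=1$ terms involving $X_0$ are absent. A history-dependent release policy is a sequence $\boldsymbol q=\{q_t(y_t\mid x^t,y^{t-1})\}_{t\ge1}$ of conditional probability distributions on $\mathcal{W}$; $\mathcal{Q}_H$ is the set of all such policies. The released locations $Y_t\in\mathcal W$ and true locations have joint law $$P^{\boldsymbol q}(X^n=x^n,Y^n=y^n)=p_{x_1}(x_1)q_1(y_1\mid x_1)\prod_{t=2}^n q_x(x_t\mid x_{t-1})\,q_t(y_t\mid x^t,y^{t-1}),$$ and $I^{\boldsymbol q}$ denotes mutual information under this law. $\mathcal{Q}_S\subseteq\mathcal{Q}_H$ is the set of policies of the form $q_t(y_t\mid x_t,x_{t-1},y^{t-1})$, depending on the true trajectory only through $(x_t,x_{t-1})$. *)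

From HB Require Import structures.
From mathcomp Require Import all_boot all_order all_algebra.
From mathcomp Require Import all_classical all_reals all_analysis.
Set Implicit Arguments. Unset Strict Implicit. Unset Printing Implicit Defensive.
Import Order.TTheory GRing.Theory Num.Theory.
Local Open Scope ring_scope.

Section Privacy.
Variables (W : finType) (R : realType).

Definition is_dist (p : W -> R) := (forall w, 0 <= p w) /\ \sum_(w : W) p w = 1.

(* Transition kernel: qx a b = q_x(x_{t+1} = b | x_t = a). *)
Definition is_stochastic (qx : W -> W -> R) := forall a, is_dist (qx a).

(* A history-dependent release policy.  With 0-based time t (paper time t+1),
   q t xs ys y = q_{t+1}(y | x^{t+1} = xs, y^{t} = ys); only arguments with
   size xs = t+1 and size ys = t are meaningful. *)
Definition policy := nat -> seq W -> seq W -> W -> R.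

Definition in_QH (q : policy) :=
  forall t (xs ys : seq W), size xs = t.+1 -> size ys = t -> is_dist (q t xs ys).

(* Q_S: q_t depends on the true trajectory only through (x_t, x_{t-1})
   (only x_1 at the first step). *)
Definition in_QS (q : policy) :=
  in_QH q /\
  forall t (xs xs' ys : seq W) (y : W), size xs = t.+1 -> size xs' = t.+1 ->
    drop t.-1 xs = drop t.-1 xs' -> q t xs ys y = q t xs' ys y.

Variables (p1 : W -> R) (qx : W -> W -> R).

Definition joint (q : policy) (n : nat) (xs ys : n.-tuple W) : R :=
  \prod_(i < n)
    ((if val i == 0%N then p1 (tnth xs i)
      else qx (nth (tnth xs i) xs i.-1) (tnth xs i)) *
     q i (take i.+1 xs) (take i ys) (tnth ys i)).

(* (X_t, X_{t-1}) (just X_1 when t = 1), t 1-based. *)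
Definition keyx (t : nat) (xs : seq W) : seq W := drop (t - 2) (take t xs).

(* Marginals under P^q on horizon n, at time t (1-based, 1 <= t <= n). *)
Definition P_ABC q n t (a c : seq W) : R :=
  \sum_(xs : n.-tuple W) \sum_(ys : n.-tuple W |
      (keyx t xs == a) && (take t ys == c)) joint q xs ys.
Definition P_AC q n t (a c : seq W) : R :=
  \sum_(xs : n.-tuple W) \sum_(ys : n.-tuple W |
      (keyx t xs == a) && (take t.-1 ys == take t.-1 c)) joint q xs ys.
Definition P_BC q n t (c : seq W) : R :=
  \sum_(xs : n.-tuple W) \sum_(ys : n.-tuple W | take t ys == c) joint q xs ys.
Definition P_C q n t (c : seq W) : R :=
  \sum_(xs : n.-tuple W) \sum_(ys : n.-tuple W |
      take t.-1 ys == take t.-1 c) joint q xs ys.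

(* I^q(X_t, X_{t-1}; Y_t | Y^{t-1}) computed from P^q on X^n, Y^n, as the
   expectation of log [P(A,B,C) P(C) / (P(A,C) P(B,C))]
   with A = (X_t,X_{t-1}), B = Y_t, C = Y^{t-1} (natural log; terms with
   zero probability contribute 0). *)
Definition cond_MI (q : policy) (n t : nat) : R :=
  \sum_(xs : n.-tuple W) \sum_(ys : n.-tuple W)
    joint q xs ys *
    ln (P_ABC q n t (keyx t xs) (take t ys) * P_C q n t (take t ys)
        / (P_AC q n t (keyx t xs) (take t ys) * P_BC q n t (take t ys))).

Definition sum_MI (q : policy) (n : nat) : R :=
  \sum_(1 <= t < n.+1) cond_MI q n t.

End Privacy.

From HB Require Import structures.
From mathcomp Require Import all_boot all_order all_algebra.
From mathcomp Require Import all_classical all_reals all_analysis.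
Set Implicit Arguments. Unset Strict Implicit. Unset Printing Implicit Defensive.
Import Order.TTheory GRing.Theory Num.Theory.
Local Open Scope ring_scope.

(* Each summand I(X_t, X_{t-1}; Y_t | Y^{t-1}) is a functional of the joint law
   of ((X_t, X_{t-1}), Y^t) alone, so it suffices to find q_s in Q_S inducing the
   same such law as q_h for every t.  Let q_s(y | x_t, x_{t-1}, y^{t-1}) be the
   P^{q_h}-average of q_h(y | x^{t-2} x_{t-1} x_t, y^{t-1}) over x^{t-2} given
   X_{t-1} = x_{t-1} and Y^{t-1} = y^{t-1}.  By the Markov property the factor
   q_x(x_t | x_{t-1}) does not depend on x^{t-2}, so it comes out of this average,
   and an induction on t shows that q_h and q_s induce the same law of
   ((X_t, X_{t-1}), Y^t). *)

Lemma takel_rcons (T : Type) (s : seq T) x n :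
  (n <= size s)%N -> take n (rcons s x) = take n s.
Proof. by move=> le_n_s; rewrite -cats1 takel_cat. Qed.

Lemma drop_rcons_last (T : Type) (x0 : T) n s x :
  size s = n.+1 -> drop n (rcons s x) = [:: last x0 s; x].
Proof.
case/lastP: s => [//|s z]; rewrite size_rcons => -[<-].
by rewrite !drop_rcons ?size_rcons // drop_size last_rcons.
Qed.

Section TrajectorySums.
Variables (W : finType) (R : nmodType).

Lemma sum_tuple_rcons n (F : seq W -> R) :
  \sum_(t : n.+1.-tuple W) F t = \sum_(t : n.-tuple W) \sum_(x : W) F (rcons t x).
Proof.
rewrite pair_big (reindex (fun p : n.-tuple W * W => [tuple of rcons p.1 p.2])) //=.
exists (fun t : n.+1.-tuple W =>
  ([tuple of belast (thead t) (behead t)], last (thead t) (behead t))).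
  move=> [[[|a s] sz] x] _; rewrite /thead (tnth_nth x) /=.
    by congr pair; apply: val_inj.
  by rewrite last_rcons; congr pair; apply: val_inj; rewrite /= belast_rcons.
by move=> t _; apply: val_inj; rewrite /= -lastI [in RHS](tuple_eta t).
Qed.

Definition sum_traj n (H : seq W -> seq W -> R) : R :=
  \sum_(xs : n.-tuple W) \sum_(ys : n.-tuple W) H xs ys.

Lemma sum_traj_rcons n H : sum_traj n.+1 H =
  sum_traj n (fun xs ys => \sum_x \sum_y H (rcons xs x) (rcons ys y)).
Proof.
rewrite /sum_traj (sum_tuple_rcons _ (fun s => \sum_(ys : n.+1.-tuple W) H s ys)).
apply: eq_bigr => xs _; rewrite [RHS]exchange_big; apply: eq_bigr => x _.
exact: (sum_tuple_rcons _ (fun s => H (rcons xs x) s)).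
Qed.

Lemma eq_sum_traj n H H' :
  (forall xs ys, size xs = n -> size ys = n -> H xs ys = H' xs ys) ->
  sum_traj n H = sum_traj n H'.
Proof.
by move=> eqH; apply: eq_bigr => xs _; apply: eq_bigr => ys _; rewrite eqH ?size_tuple.
Qed.

End TrajectorySums.

Section ReleaseProcess.
Variables (W : finType) (R : realType) (p1 : W -> R) (qx : W -> W -> R).
Hypotheses (hp1 : is_dist p1) (hqx : is_stochastic qx).
Variable x0 : W.

Definition next_law (xs : seq W) (x : W) : R :=
  if xs is [::] then p1 x else qx (last x0 xs) x.

(* [joint] on plain sequences, so that trajectories can be extended by [rcons];
   [x0] is only a default for [nth] and [last]. *)
Definition path_joint (q : policy W R) n (xs ys : seq W) : R :=
  \prod_(i < n) (next_law (take i xs) (nth x0 xs i) *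
                 q i (take i.+1 xs) (take i ys) (nth x0 ys i)).

Lemma next_law_ge0 xs x : 0 <= next_law xs x.
Proof. by case: xs => [|? ?]; [apply: hp1.1 | apply: (hqx _).1]. Qed.

Lemma sum_next_law xs : \sum_x next_law xs x = 1.
Proof. by case: xs => [|? ?]; [apply: hp1.2 | apply: (hqx _).2]. Qed.

Lemma next_law_last n xs x : size xs = n.+1 -> next_law xs x = qx (last x0 xs) x.
Proof. by case: xs. Qed.

Lemma joint_path_joint q n (xs ys : n.-tuple W) :
  joint p1 qx q xs ys = path_joint q n xs ys.
Proof.
apply: eq_bigr => -[[|i] lt_i_n] _; rewrite !(tnth_nth x0) ?take0 //=.
have lt_i_xs : (i < size xs)%N by rewrite size_tuple ltnW.
rewrite (take_nth x0 lt_i_xs) (@next_law_last i) ?size_rcons ?size_takel ?last_rcons 1?ltnW //.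
by rewrite (set_nth_default x0).
Qed.

Lemma path_joint_rcons q n xs ys x y : size xs = n -> size ys = n ->
  path_joint q n.+1 (rcons xs x) (rcons ys y) =
  path_joint q n xs ys * (next_law xs x * q n (rcons xs x) ys y).
Proof.
move=> sx sy; rewrite /path_joint big_ord_recr /=; congr (_ * _).
  apply: eq_bigr => i _; have lt_i_n := ltn_ord i.
  by rewrite !nth_rcons sx sy lt_i_n !takel_rcons ?sx ?sy // ltnW.
rewrite !nth_rcons sx sy ltnn eqxx -!cats1 (take_size_cat _ sx) (take_size_cat _ sy).
by rewrite take_oversize // size_cat sx addn1.
Qed.

Lemma path_joint_ge0 q n xs ys : in_QH q ->
  (n <= size xs)%N -> (n <= size ys)%N -> 0 <= path_joint q n xs ys.
Proof.
move=> hq le_n_xs le_n_ys; apply: prodr_ge0 => i _; have lt_i_n := ltn_ord i.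
rewrite mulr_ge0 ?next_law_ge0 // (hq i _ _ _ _).1 // size_takel //.
  exact: leq_trans le_n_xs.
exact: leq_trans (ltnW lt_i_n) le_n_ys.
Qed.

Lemma sum_next_release q n xs ys : in_QH q -> size xs = n -> size ys = n ->
  \sum_x \sum_y next_law xs x * q n (rcons xs x) ys y = 1.
Proof.
move=> hq sx sy; rewrite -[RHS](sum_next_law xs); apply: eq_bigr => x _.
by rewrite -mulr_sumr (hq n _ _ _ sy).2 ?mulr1 ?size_rcons ?sx.
Qed.

Lemma sum_traj_path_joint_rcons q n (g : seq W -> seq W -> R) :
  sum_traj n.+1 (fun xs ys => path_joint q n.+1 xs ys * g xs ys) =
  sum_traj n (fun xs ys => path_joint q n xs ys *
    \sum_x \sum_y next_law xs x * q n (rcons xs x) ys y * g (rcons xs x) (rcons ys y)).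
Proof.
rewrite sum_traj_rcons; apply: eq_sum_traj => xs ys sx sy.
rewrite mulr_sumr; apply: eq_bigr => x _; rewrite mulr_sumr; apply: eq_bigr => y _.
by rewrite path_joint_rcons // !mulrA.
Qed.

Lemma sum_traj_path_joint_take q n k (G : seq W -> seq W -> R) : in_QH q ->
  sum_traj (n + k) (fun xs ys => path_joint q (n + k) xs ys * G (take n xs) (take n ys)) =
  sum_traj n (fun xs ys => path_joint q n xs ys * G xs ys).
Proof.
move=> hq; elim: k => [|k IHk].
  by rewrite addn0; apply: eq_sum_traj => xs ys sx sy; rewrite !take_oversize ?sx ?sy.
rewrite addnS sum_traj_path_joint_rcons -IHk; apply: eq_sum_traj => xs ys sx sy.
have le_n_nk : (n <= n + k)%N by rewrite leq_addr.
under eq_bigr => x _ do under eq_bigr => y _ do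
  rewrite !takel_rcons ?sx ?sy // mulrC.
under eq_bigr do rewrite -mulr_sumr.
by rewrite -mulr_sumr sum_next_release ?mulr1.
Qed.

Lemma keyx_rcons n xs x :
  size xs = n.+1 -> keyx n.+2 (rcons xs x) = [:: last x0 xs; x].
Proof.
move=> sx; rewrite /keyx !subSS subn0 take_oversize ?size_rcons ?sx //.
exact: drop_rcons_last.
Qed.

Lemma last_keyx n xs : size xs = n.+1 -> last x0 (keyx n.+1 xs) = last x0 xs.
Proof.
case/lastP: xs => [//|xs x]; rewrite size_rcons => -[sx].
by rewrite /keyx take_oversize ?size_rcons ?sx // drop_rcons ?last_rcons // sx subSS leq_subr.
Qed.

Lemma sum_traj_key_rcons q n (g : seq W -> seq W -> R) :
  sum_traj n.+2 (fun xs ys => path_joint q n.+2 xs ys * g (keyx n.+2 xs) ys) =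
  sum_traj n.+1 (fun xs ys => path_joint q n.+1 xs ys * \sum_x \sum_y
    qx (last x0 xs) x * q n.+1 (rcons xs x) ys y * g [:: last x0 xs; x] (rcons ys y)).
Proof.
rewrite sum_traj_path_joint_rcons; apply: eq_sum_traj => xs ys sx _; congr (_ * _).
by apply: eq_bigr => x _; apply: eq_bigr => y _; rewrite keyx_rcons // (@next_law_last n).
Qed.

Definition key_mean q n t (f : seq W -> seq W -> R) : R :=
  \sum_(xs : n.-tuple W) \sum_(ys : n.-tuple W)
    joint p1 qx q xs ys * f (keyx t xs) (take t ys).

Lemma sum_joint_mkcond q n (P : n.-tuple W -> n.-tuple W -> bool) :
  \sum_(xs : n.-tuple W) \sum_(ys : n.-tuple W | P xs ys) joint p1 qx q xs ys =
  \sum_(xs : n.-tuple W) \sum_(ys : n.-tuple W) joint p1 qx q xs ys * (P xs ys)%:R.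
Proof.
apply: eq_bigr => xs _; rewrite big_mkcond; apply: eq_bigr => ys _.
by case: (P xs ys); rewrite ?mulr1 ?mulr0.
Qed.

Lemma P_ABC_key_mean q n t a c :
  P_ABC p1 qx q n t a c = key_mean q n t (fun k c' => ((k == a) && (c' == c))%:R).
Proof. by rewrite /P_ABC sum_joint_mkcond. Qed.

Lemma P_BC_key_mean q n t c :
  P_BC p1 qx q n t c = key_mean q n t (fun _ c' => (c' == c)%:R).
Proof. by rewrite /P_BC sum_joint_mkcond. Qed.

Lemma P_AC_key_mean q n t a c : P_AC p1 qx q n t a c =
  key_mean q n t (fun k c' => ((k == a) && (take t.-1 c' == take t.-1 c))%:R).
Proof.
rewrite /P_AC sum_joint_mkcond; apply: eq_bigr => xs _; apply: eq_bigr => ys _.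
by rewrite take_takel ?leq_pred.
Qed.

Lemma P_C_key_mean q n t c :
  P_C p1 qx q n t c = key_mean q n t (fun _ c' => (take t.-1 c' == take t.-1 c)%:R).
Proof.
rewrite /P_C sum_joint_mkcond; apply: eq_bigr => xs _; apply: eq_bigr => ys _.
by rewrite take_takel ?leq_pred.
Qed.

Lemma cond_MI_key_mean q n t : cond_MI p1 qx q n t = key_mean q n t (fun k c =>
  ln (P_ABC p1 qx q n t k c * P_C p1 qx q n t c / (P_AC p1 qx q n t k c * P_BC p1 qx q n t c))).
Proof. by []. Qed.

Lemma key_mean_sum_traj q n t f : in_QH q -> (t <= n)%N ->
  key_mean q n t f = sum_traj t (fun xs ys => path_joint q t xs ys * f (keyx t xs) ys).
Proof.
move=> hq /subnKC <-; rewrite -(sum_traj_path_joint_take _ (n - t) (fun a c => f (keyx t a) c)) //.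
apply: eq_bigr => xs _; apply: eq_bigr => ys _.
by rewrite joint_path_joint /keyx take_takel.
Qed.

Section AveragedPolicy.
Variable qh : policy W R.
Hypothesis hqh : in_QH qh.

Definition prefix_mass n a ys : R :=
  \sum_(xs : n.-tuple W | last x0 xs == a) path_joint qh n xs ys.

Definition prefix_release_mass n a b ys y : R :=
  \sum_(xs : n.-tuple W | last x0 xs == a) path_joint qh n xs ys * qh n (rcons xs b) ys y.

(* P^{qh}(Y_{n+1} = y | X_n = a, Y^n = ys) when X_{n+1} = b is fed to qh; on a
   null conditioning event any distribution will do, here p1. *)
Definition cond_release n a b ys y : R :=
  if prefix_mass n a ys == 0 then p1 y
  else prefix_release_mass n a b ys y / prefix_mass n a ys.

Definition qs : policy W R := fun n xs ys y =>
  if n is 0 then qh 0 xs ys y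
  else cond_release n (head x0 (drop n.-1 xs)) (last x0 (drop n.-1 xs)) ys y.

Lemma prefix_mass_cond_release n a b ys y : size ys = n ->
  prefix_mass n a ys * cond_release n a b ys y = prefix_release_mass n a b ys y.
Proof.
move=> sy; rewrite /cond_release; case: eqP => [mass0|/eqP mass_neq0].
  rewrite mass0 mul0r; symmetry; apply: big1 => xs /eqP last_xs.
  suff -> : path_joint qh n xs ys = 0 by rewrite mul0r.
  apply: (psumr_eq0P _ mass0); last by rewrite last_xs.
  by move=> xs' _; rewrite path_joint_ge0 ?size_tuple ?sy.
by rewrite mulrC divfK.
Qed.

Lemma cond_release_dist n a b ys : size ys = n -> is_dist (cond_release n a b ys).
Proof.
move=> sy; rewrite /cond_release; case: eqP => [_|/eqP mass_neq0]; first exact: hp1.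
have mass_ge0 : 0 <= prefix_mass n a ys.
  by apply: sumr_ge0 => xs _; rewrite path_joint_ge0 ?size_tuple ?sy.
split=> [y|].
  rewrite divr_ge0 // sumr_ge0 // => xs _.
  by rewrite mulr_ge0 ?path_joint_ge0 ?(hqh _ _).1 ?size_rcons ?size_tuple ?sy.
rewrite -mulr_suml /prefix_release_mass exchange_big /= -[RHS](divff mass_neq0).
congr (_ / _); apply: eq_bigr => xs _.
by rewrite -mulr_sumr (hqh _ sy).2 ?mulr1 // size_rcons size_tuple.
Qed.

Lemma qs_in_QS : in_QS qs.
Proof.
split=> [[|n] xs ys sx sy | [|n] xs xs' ys y _ _ eq_drop].
- exact: hqh.
- exact: cond_release_dist.
- by move: eq_drop; rewrite /= !drop0 => ->.
- by rewrite /qs eq_drop.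
Qed.

Lemma qs_rcons n xs x ys y : size xs = n.+1 ->
  qs n.+1 (rcons xs x) ys y = cond_release n.+1 (last x0 xs) x ys y.
Proof. by move=> sx; rewrite /qs /= (drop_rcons_last x0 _ sx). Qed.

Definition next_key_mean (g : seq W -> seq W -> R) n a ys : R :=
  \sum_x \sum_y qx a x * cond_release n a x ys y * g [:: a; x] (rcons ys y).

(* Given X_n = a, the transition factor qx a x no longer depends on the prefix. *)
Lemma sum_last_release n a ys (h : W -> W -> R) : size ys = n ->
  \sum_(xs : n.-tuple W | last x0 xs == a)
     path_joint qh n xs ys * \sum_x \sum_y qx a x * qh n (rcons xs x) ys y * h x y =
  prefix_mass n a ys * \sum_x \sum_y qx a x * cond_release n a x ys y * h x y.
Proof.
move=> sy; transitivity (\sum_x \sum_y \sum_(xs : n.-tuple W | last x0 xs == a)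
    qx a x * (path_joint qh n xs ys * qh n (rcons xs x) ys y) * h x y).
  under [RHS]eq_bigr do rewrite exchange_big /=; rewrite [RHS]exchange_big /=.
  apply: eq_bigr => xs _; rewrite mulr_sumr; apply: eq_bigr => x _.
  rewrite mulr_sumr; apply: eq_bigr => y _.
  by rewrite !mulrA (mulrC (path_joint _ _ _ _)).
rewrite mulr_sumr; apply: eq_bigr => x _; rewrite mulr_sumr; apply: eq_bigr => y _.
by rewrite mulrA mulrCA prefix_mass_cond_release // mulr_sumr mulr_suml.
Qed.

Lemma sum_traj_qh_step n g :
  sum_traj n.+2 (fun xs ys => path_joint qh n.+2 xs ys * g (keyx n.+2 xs) ys) =
  sum_traj n.+1 (fun xs ys => path_joint qh n.+1 xs ys * next_key_mean g n.+1 (last x0 xs) ys).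
Proof.
rewrite sum_traj_key_rcons /sum_traj exchange_big [RHS]exchange_big.
apply: eq_bigr => ys _ /=.
rewrite !(partition_big (fun xs : n.+1.-tuple W => last x0 xs) predT) //=.
apply: eq_bigr => a _.
under eq_bigr => xs last_xs do rewrite (eqP last_xs).
under [RHS]eq_bigr => xs last_xs do rewrite (eqP last_xs).
by rewrite sum_last_release ?size_tuple // -mulr_suml.
Qed.

Lemma sum_traj_qs_step n g :
  sum_traj n.+2 (fun xs ys => path_joint qs n.+2 xs ys * g (keyx n.+2 xs) ys) =
  sum_traj n.+1 (fun xs ys => path_joint qs n.+1 xs ys * next_key_mean g n.+1 (last x0 xs) ys).
Proof.
rewrite sum_traj_key_rcons; apply: eq_sum_traj => xs ys sx _; congr (_ * _).
by apply: eq_bigr => x _; apply: eq_bigr => y _; rewrite qs_rcons.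
Qed.

Lemma sum_traj_key_qs n g :
  sum_traj n.+1 (fun xs ys => path_joint qh n.+1 xs ys * g (keyx n.+1 xs) ys) =
  sum_traj n.+1 (fun xs ys => path_joint qs n.+1 xs ys * g (keyx n.+1 xs) ys).
Proof.
elim: n g => [|n IHn] g.
  by apply: eq_sum_traj => xs ys _ _; rewrite /path_joint !big_ord1.
rewrite sum_traj_qh_step sum_traj_qs_step.
have last_key q : sum_traj n.+1 (fun xs ys =>
    path_joint q n.+1 xs ys * next_key_mean g n.+1 (last x0 xs) ys) =
  sum_traj n.+1 (fun xs ys =>
    path_joint q n.+1 xs ys * next_key_mean g n.+1 (last x0 (keyx n.+1 xs)) ys).
  by apply: eq_sum_traj => xs ys sx _; rewrite last_keyx.
by rewrite !last_key (IHn (fun k ys => next_key_mean g n.+1 (last x0 k) ys)).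
Qed.

Lemma key_mean_qs n t f : (0 < t <= n)%N -> key_mean qh n t f = key_mean qs n t f.
Proof.
case: t => // t /andP[_ le_t_n].
rewrite !key_mean_sum_traj //; [exact: sum_traj_key_qs | exact: qs_in_QS.1].
Qed.

Lemma cond_MI_qs n t : (0 < t <= n)%N -> cond_MI p1 qx qh n t = cond_MI p1 qx qs n t.
Proof.
move=> t_range; have eq_mean f := key_mean_qs f t_range.
rewrite !cond_MI_key_mean eq_mean; congr key_mean; apply/funext => k; apply/funext => c.
by rewrite !P_ABC_key_mean !P_AC_key_mean !P_BC_key_mean !P_C_key_mean !eq_mean.
Qed.

Lemma sum_MI_qs n : sum_MI p1 qx qh n = sum_MI p1 qx qs n.
Proof. by apply: eq_big_nat => t t_range; apply: cond_MI_qs. Qed.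

End AveragedPolicy.
End ReleaseProcess.

Theorem lemma2 (W : finType) (R : realType) (p1 : W -> R) (qx : W -> W -> R)
  (hp1 : is_dist p1) (hqx : is_stochastic qx)
  (qh : policy W R) (hqh : in_QH qh) :
  exists qs : policy W R, in_QS qs /\
    forall n : nat, (1 <= n)%N ->
      sum_MI p1 qx qh n = sum_MI p1 qx qs n.
Proof.
(* [qs] needs a default state; if [W] is empty, [qh] is vacuously in Q_S. *)
have [x0 _ | W_empty] := pickP (@predT W).
  exists (qs p1 qx x0 qh); split; first exact: qs_in_QS.
  by move=> n _; apply: sum_MI_qs.
exists qh; split=> //; split=> // t [|x xs] //.
by have := W_empty x.
Qed.
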